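(* Let $f(y_1,y_2,y_3)$ be any real ternary cubic form. Let $G$ be the $3\times3$ matrix with entries $$G_{ij}=\frac{\partial f}{\partial y_i}\frac{\partial f}{\partial y_j}-f\,\frac{\partial^2 f}{\partial y_i\partial y_j}$$ (which equals $-f^2\partial^2(\log f)/\partial y_i\partial y_j$ where $f\neq0$). Let $H=\det(\partial^2 f/\partial y_i\partial y_j)$ be the Hessian determinant of $f$. Then, as an identity of polynomials in $y$, $$\det G=\tfrac12 f^3H.$$ *)

(* Polynomials in y1,y2,y3 are represented as the iterated
   univariate polynomial ring R[y1][y2][y3] = {poly {poly {poly R}}}. *)
From HB Require Import structures.
From mathcomp Require Import all_boot all_order all_algebra.
Set Implicit Arguments. Unset Strict Implicit. Unset Printing Implicit Defensive.
Import Order.TTheory GRing.Theory Num.Theory.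
Local Open Scope ring_scope.

Notation poly3 R := {poly {poly {poly R}}}.

Definition cst3 {R : nzRingType} (a : R) : poly3 R := a%:P%:P%:P.

Definition var3 {R : nzRingType} (i : 'I_3) : poly3 R :=
  match val i with
  | 0 => ('X%:P)%:P
  | 1 => 'X%:P
  | _ => 'X
  end.

Definition pderiv3 {R : nzRingType} (i : 'I_3) (p : poly3 R) : poly3 R :=
  match val i with
  | 0 => map_poly (map_poly deriv) p
  | 1 => map_poly deriv p
  | _ => deriv p
  end.

Definition cubic_form {R : nzRingType} (f : poly3 R) : Prop :=
  exists c : 'I_3 -> 'I_3 -> 'I_3 -> R,
    f = \sum_(i < 3) \sum_(j < 3) \sum_(k < 3) cst3 (c i j k) * var3 i * var3 j * var3 k.

From HB Require Import structures.
From mathcomp Require Import all_boot all_order all_algebra.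
From mathcomp Require Import ring.
Set Implicit Arguments. Unset Strict Implicit. Unset Printing Implicit Defensive.
Import Order.TTheory GRing.Theory Num.Theory.
Local Open Scope ring_scope.

(* Write g = (d_1 f, d_2 f, d_3 f) for the gradient of the cubic form f,
   M = (d_i d_j f) for its Hessian matrix and y = (y_1, y_2, y_3).
   Euler's identity gives sum_k y_k d_k f = 3 f, and differentiating it,
   sum_k (d_i d_k f) y_k = 2 d_i f.  Hence the matrix G of the statement
   factors as G = M N with N = (1/2) y g^T - f I:
     (M N)_ij = (1/2) g_j sum_k M_ik y_k - f M_ij = g_i g_j - f M_ij.
   N is a rank-one perturbation of -f I, so
     det N = f^2 (1/2) (y . g) - f^3 = (3/2) f^3 - f^3 = (1/2) f^3,
   and det G = det M * det N = (1/2) f^3 H.  Everything except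
   the last step works over any commutative ring in which 2 is invertible. *)

Definition leibniz {A : nzRingType} (D : A -> A) : Prop :=
  forall x y, D (x * y) = D x * y + x * D y.

Section Derivations.
Variables (A : nzRingType) (D : {additive A -> A}).
Hypothesis DM : leibniz D.

Lemma leibniz1 : D 1 = 0.
Proof.
have D11 : D 1 + D 1 = D 1 by rewrite -[in RHS](mulr1 1) DM mulr1 mul1r.
by apply: (addrI (D 1)); rewrite D11 addr0.
Qed.

Lemma leibniz_monomial c a b d :
  D c = 0 -> D a = a -> D b = b -> D d = d ->
  D (c * a * b * d) = (c * a * b * d) *+ 3.
Proof.
move=> Dc Da Db Dd; rewrite !DM Dc Da Db Dd mul0r add0r.
by rewrite mulrDl mulrSr mulr2n.
Qed.

(* Applying a derivation coefficientwise is a derivation of the polynomial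
   ring; this is how d/dy_1 and d/dy_2 act on R[y1][y2][y3]. *)
Lemma map_poly_leibniz : leibniz (map_poly D).
Proof.
move=> p q; apply/polyP => i.
rewrite coefD !coef_map !coefM raddf_sum -big_split.
by apply: eq_bigr => j _; rewrite DM !coef_map.
Qed.

Lemma map_polyX_leibniz : map_poly D 'X = 0.
Proof.
apply/polyP => i; rewrite coef_map coefX coef0.
by case: (i == 1)%N; rewrite ?raddf0 ?leibniz1.
Qed.

End Derivations.

Lemma pderiv3_is_nmod_morphism (R : nzRingType) (i : 'I_3) :
  nmod_morphism (@pderiv3 R i).
Proof.
rewrite /pderiv3; case: (val i) => [|[|_]]; split;
  by [exact: raddf0 | exact: raddfD].
Qed.

HB.instance Definition _ (R : nzRingType) (i : 'I_3) :=
  GRing.isNmodMorphism.Build (poly3 R) (poly3 R) (@pderiv3 R i)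
    (@pderiv3_is_nmod_morphism R i).

Section Partials.
Variable R : nzRingType.
Implicit Types (i j : 'I_3) (c : R) (p : poly3 R).

Lemma pderiv3_leibniz i : leibniz (@pderiv3 R i).
Proof.
rewrite /pderiv3; case: (val i) => [|[|_]].
- by apply: map_poly_leibniz; apply: map_poly_leibniz; exact: derivM.
- by apply: map_poly_leibniz; exact: derivM.
- exact: derivM.
Qed.

Lemma pderiv3_cst3 i c : pderiv3 i (cst3 c) = 0.
Proof.
rewrite /pderiv3 /cst3; case: (val i) => [|[|_]];
  by rewrite ?map_polyC /= ?map_polyC /= derivC ?polyC0.
Qed.

Lemma pderiv3_var3 i j : pderiv3 i (var3 j) = (i == j)%:R :> poly3 R.
Proof.
case: i j => [[|[|[|i]]] hi] // [[|[|[|j]]] hj] //; rewrite /pderiv3 /var3 /=.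
all: rewrite ?map_polyC /= ?map_polyC /= ?derivX ?derivC ?polyC1 ?polyC0 //.
all: rewrite map_polyX_leibniz ?polyC0 //.
all: by [exact: derivM | apply: map_poly_leibniz; exact: derivM].
Qed.
End Partials.

Lemma sum_delta (A : nzSemiRingType) n (a : 'I_n -> A) j :
  \sum_(k < n) (j == k)%:R * a k = a j.
Proof.
rewrite (bigD1 j) //= eqxx mul1r big1 ?addr0 // => k /negPf.
by rewrite eq_sym => ->; rewrite mul0r.
Qed.

Definition euler3 {R : nzRingType} (p : poly3 R) : poly3 R :=
  \sum_(k < 3) var3 k * pderiv3 k p.

Lemma euler3_is_nmod_morphism (R : nzRingType) : nmod_morphism (@euler3 R).
Proof.
split=> [|p q]; rewrite /euler3.
  by rewrite big1 // => k _; rewrite raddf0 mulr0.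
by rewrite -big_split; apply: eq_bigr => k _; rewrite raddfD mulrDr.
Qed.

HB.instance Definition _ (R : nzRingType) :=
  GRing.isNmodMorphism.Build (poly3 R) (poly3 R) (@euler3 R)
    (@euler3_is_nmod_morphism R).

Section Euler.
Variable R : comNzRingType.
Implicit Types (f p q : poly3 R).

Lemma euler3_leibniz : leibniz (@euler3 R).
Proof.
move=> p q; rewrite /euler3 mulr_suml mulr_sumr -big_split.
by apply: eq_bigr => k _; rewrite pderiv3_leibniz /=; ring.
Qed.

Lemma euler3_cst3 c : euler3 (cst3 c : poly3 R) = 0.
Proof. by rewrite /euler3 big1 // => k _; rewrite pderiv3_cst3 mulr0. Qed.

Lemma euler3_var3 j : euler3 (var3 j : poly3 R) = var3 j.
Proof.
rewrite /euler3 -[RHS](sum_delta (fun k => var3 k) j).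
by apply: eq_bigr => k _; rewrite pderiv3_var3 mulrC eq_sym.
Qed.

Lemma euler3_cubic f : cubic_form f -> euler3 f = f *+ 3.
Proof.
case=> c ->; rewrite !raddf_sum -!sumrMnl; apply: eq_bigr => i _.
rewrite !raddf_sum -!sumrMnl; apply: eq_bigr => j _.
rewrite !raddf_sum -!sumrMnl; apply: eq_bigr => k _.
by apply: leibniz_monomial;
  [exact: euler3_leibniz | exact: euler3_cst3 | exact: euler3_var3..].
Qed.

Lemma euler3_gradient f i : cubic_form f ->
  \sum_(k < 3) pderiv3 i (pderiv3 k f) * var3 k = pderiv3 i f *+ 2.
Proof.
move=> /euler3_cubic /(congr1 (pderiv3 i)); rewrite raddfMn /euler3 raddf_sum /=.
under eq_bigr do rewrite pderiv3_leibniz pderiv3_var3.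
rewrite big_split sum_delta /= mulrS => /addrI <-.
by apply: eq_bigr => k _; rewrite mulrC.
Qed.

End Euler.

Section Det3.
Variable A : comNzRingType.

Lemma det_mx33 (F : nat -> nat -> A) : \det (\matrix_(i < 3, j < 3) F i j) =
    F 0 0 * (F 1 1 * F 2 2 - F 1 2 * F 2 1)
  - F 0 1 * (F 1 0 * F 2 2 - F 1 2 * F 2 0)
  + F 0 2 * (F 1 0 * F 2 1 - F 1 1 * F 2 0).
Proof.
rewrite (expand_det_row _ ord0) !big_ord_recl big_ord0 /cofactor.
rewrite !(expand_det_row _ ord0) !big_ord_recl !big_ord0 /cofactor !det_mx11.
rewrite !mxE /= /bump /=; ring.
Qed.

Lemma det_rank_one3 (u v : 'I_3 -> A) (a : A) :
  \det (\matrix_(i < 3, j < 3) (u i * v j - (i == j)%:R * a))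
  = a ^+ 2 * \sum_(k < 3) u k * v k - a ^+ 3.
Proof.
pose at_nat (x : 'I_3 -> A) n := x (inord n).
have -> : \matrix_(i < 3, j < 3) (u i * v j - (i == j)%:R * a) =
          \matrix_(i < 3, j < 3) (at_nat u i * at_nat v j - (i == j :> nat)%:R * a).
  by apply/matrixP => i j; rewrite !mxE /at_nat !inord_val.
rewrite (det_mx33 (fun n m => at_nat u n * at_nat v m - (n == m)%:R * a)).
rewrite (eq_bigr (fun k : 'I_3 => at_nat u k * at_nat v k)); last first.
  by move=> k _; rewrite /at_nat inord_val.
rewrite !big_ord_recl big_ord0 /= /bump /=; ring.
Qed.

End Det3.

Definition hessian3 {R : nzRingType} (f : poly3 R) : 'M[poly3 R]_3 :=
  \matrix_(i < 3, j < 3) pderiv3 i (pderiv3 j f).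

Definition log_hessian3 {R : nzRingType} (f : poly3 R) : 'M[poly3 R]_3 :=
  \matrix_(i < 3, j < 3) (pderiv3 i f * pderiv3 j f - f * pderiv3 i (pderiv3 j f)).

Definition euler_correction3 {R : nzRingType} (h : R) (f : poly3 R) : 'M[poly3 R]_3 :=
  \matrix_(k < 3, j < 3) (cst3 h * var3 k * pderiv3 j f - (k == j)%:R * f).

Section LogHessian.
Variables (R : comNzRingType) (h : R) (f : poly3 R).
Hypotheses (h2 : h *+ 2 = 1) (hf : cubic_form f).

Let h2_poly : cst3 h *+ 2 = 1 :> poly3 R.
Proof. by rewrite /cst3 -3!polyCMn h2 !polyC1. Qed.

(* G = M N, from the differentiated Euler identity. *)
Lemma log_hessian3_factor :
  log_hessian3 f = hessian3 f *m euler_correction3 h f.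
Proof.
apply/matrixP => i j; rewrite !mxE.
under eq_bigr do rewrite !mxE mulrBr.
rewrite sumrB (eq_bigr (fun k => cst3 h * pderiv3 j f *
                                 (pderiv3 i (pderiv3 k f) * var3 k))); last first.
  by move=> k _; ring.
rewrite -mulr_sumr euler3_gradient //.
rewrite (eq_bigr (fun k => (j == k)%:R * (pderiv3 i (pderiv3 k f) * f))); last first.
  by move=> k _; rewrite eq_sym; ring.
rewrite sum_delta; ring: h2_poly.
Qed.

(* det N = h f^3, from the rank-one formula and Euler's identity. *)
Lemma det_euler_correction3 : \det (euler_correction3 h f) = cst3 h * f ^+ 3.
Proof.
rewrite (det_rank_one3 (fun k => cst3 h * var3 k) (fun j => pderiv3 j f)).
rewrite (eq_bigr (fun k => cst3 h * (var3 k * pderiv3 k f))); last first.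
  by move=> k _; rewrite mulrA.
rewrite -mulr_sumr -/(euler3 f) euler3_cubic //.
by rewrite mulrnAr -mulrnAl mulrSr h2_poly; ring.
Qed.

(* The theorem over any commutative ring in which 2 is invertible. *)
Lemma det_log_hessian3 :
  \det (log_hessian3 f) = cst3 h * f ^+ 3 * \det (hessian3 f).
Proof.
by rewrite log_hessian3_factor det_mulmx det_euler_correction3 mulrC.
Qed.

End LogHessian.

Theorem lemma3p5 (R : realFieldType) (f : poly3 R) (hf : cubic_form f) :
  \det (\matrix_(i < 3, j < 3)
          (pderiv3 i f * pderiv3 j f - f * pderiv3 i (pderiv3 j f)))
  = cst3 (2^-1 : R) * f ^+ 3 *
    \det (\matrix_(i < 3, j < 3) pderiv3 i (pderiv3 j f)).
Proof.
apply: det_log_hessian3 hf.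
by rewrite -[_ *+ 2]mulr_natr mulVf // pnatr_eq0.
Qed.
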